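(* Let $n_1,n_2\ge3$. The graphs $\overline{L(K_{2,n_1})}$ and $\overline{L(K_{2,n_2})}$ are $\mathcal{C}$-$\mathrm{HH}$-symmetric if and only if they are isomorphic (i.e. $n_1=n_2$).
   Context: $\overline{L(K_{2,n})}$ (bipartite complement of a perfect matching) is the bipartite graph with parts $\{x_1,\dots,x_n\}$, $\{y_1,\dots,y_n\}$ and $x_i\sim y_j$ iff $i\ne j$. Subgraphs are induced; a homomorphism maps edges to edges. $G_1$ is $\mathcal{C}$-$\mathrm{HH}$-morphic to $G_2$ if every homomorphism from a finite connected induced subgraph $A$ of $G_1$ onto an induced subgraph $B$ of $G_2$ extends to a homomorphism $G_1\to G_2$; $G_1,G_2$ are $\mathcal{C}$-$\mathrm{HH}$-symmetric if each is $\mathcal{C}$-$\mathrm{HH}$-morphic to the other. *)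

From mathcomp Require Import all_boot.
Set Implicit Arguments. Unset Strict Implicit. Unset Printing Implicit Defensive.

(* Bipartite complement of a perfect matching on n+n vertices:
   x_i = (false, i), y_j = (true, j); x_i ~ y_j iff i <> j. *)
Definition BCPM_V (n : nat) : finType := (bool * 'I_n)%type.
Definition BCPM_adj (n : nat) : rel (BCPM_V n) :=
  fun u v => (u.1 != v.1) && (u.2 != v.2).

Definition induced_connected (T : finType) (e : rel T) (A : {set T}) : Prop :=
  A != set0 /\
  forall x y, x \in A -> y \in A ->
    connect [rel u v | [&& u \in A, v \in A & e u v]] x y.

Definition hom_on (T1 T2 : finType) (e1 : rel T1) (e2 : rel T2)
  (A : {set T1}) (f : T1 -> T2) : Prop :=
  forall x y, x \in A -> y \in A -> e1 x y -> e2 (f x) (f y).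

Definition graph_hom (T1 T2 : finType) (e1 : rel T1) (e2 : rel T2)
  (g : T1 -> T2) : Prop :=
  forall x y, e1 x y -> e2 (g x) (g y).

Definition CHH_morphic (T1 T2 : finType) (e1 : rel T1) (e2 : rel T2) : Prop :=
  forall (A : {set T1}) (B : {set T2}) (f : T1 -> T2),
    induced_connected e1 A ->
    hom_on e1 e2 A f ->
    f @: A = B ->
    exists g : T1 -> T2, graph_hom e1 e2 g /\ (forall x, x \in A -> g x = f x).

Definition CHH_symmetric (T1 T2 : finType) (e1 : rel T1) (e2 : rel T2) : Prop :=
  CHH_morphic e1 e2 /\ CHH_morphic e2 e1.

Definition graph_iso (T1 T2 : finType) (e1 : rel T1) (e2 : rel T2) : Prop :=
  exists g : T1 -> T2, bijective g /\ forall x y, e2 (g x) (g y) = e1 x y.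

(* A homomorphism from a connected induced subgraph of a bipartite graph either
   keeps or swaps the two sides uniformly.  When n1 <= n2, such a partial map
   into the n2-graph extends one vertex at a time: a missing vertex has n1 - 1
   neighbours on the other side, whose images block at most n1 - 1 < n2 indices,
   so a free index on the correct side is always available.  Conversely, if
   3 <= n2 < n1, the set {x_0, x_1} ∪ {y_j | j < n2} is connected (through y_2)
   and maps identically into the n2-graph; but x_(n2) is adjacent to every such
   y_j, while whatever index k its image gets, that image is not adjacent to
   y_k, so the map does not extend. *)

From mathcomp Require Import all_boot zify.

Set Implicit Arguments.
Unset Strict Implicit.
Unset Printing Implicit Defensive.

Lemma BCPM_adj_sym n : symmetric (@BCPM_adj n).
Proof. by move=> u v; rewrite /BCPM_adj eq_sym (eq_sym u.2). Qed.

Lemma BCPM_adj_irrefl n : irreflexive (@BCPM_adj n).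
Proof. by move=> u; rewrite /BCPM_adj eqxx. Qed.

Lemma hom_on_setU1 (T1 T2 : finType) (e1 : rel T1) (e2 : rel T2)
    (A : {set T1}) (f : T1 -> T2) (v : T1) (w : T2) :
  symmetric e1 -> symmetric e2 -> irreflexive e1 ->
  hom_on e1 e2 A f -> (forall z, z \in A -> e1 v z -> e2 w (f z)) ->
  hom_on e1 e2 (v |: A) (fun y => if y == v then w else f y).
Proof.
move=> sym1 sym2 irr1 hf hv x y; rewrite !inE.
case: (eqVneq x v) => [-> | _] /=; case: (eqVneq y v) => [-> | _] //=.
- by rewrite irr1.
- by move=> _ yA; apply: hv.
- by move=> xA _; rewrite sym1 sym2; apply: hv.
- exact: hf.
Qed.

Section Extension.

Variables n1 n2 : nat.

Notation hom_on := (hom_on (@BCPM_adj n1) (@BCPM_adj n2)).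

Definition shifts_sides (s : bool) (A : {set BCPM_V n1})
    (f : BCPM_V n1 -> BCPM_V n2) : Prop :=
  {in A, forall a, (f a).1 = a.1 (+) s}.

Lemma hom_on_shifts_sides (A : {set BCPM_V n1}) f :
  induced_connected (@BCPM_adj n1) A -> hom_on A f -> exists s, shifts_sides s A f.
Proof.
move=> [/set0Pn [a0 a0A] A_conn] hf.
exists (a0.1 (+) (f a0).1) => a aA.
set Q := [pred a | (f a).1 == a.1 (+) (a0.1 (+) (f a0).1)].
have Q_closed : closed [rel u v | [&& u \in A, v \in A & BCPM_adj u v]] Q.
  move=> u v /and3P [uA vA huv]; have := hf u v uA vA huv.
  move: huv; rewrite /BCPM_adj /= => /andP [+ _] /andP [+ _].
  rewrite !inE /=; move: (u.1) (v.1) ((f u).1) ((f v).1) (a0.1) ((f a0).1).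
  by do 6!case.
have := closed_connect Q_closed (A_conn a0 a a0A aA).
by rewrite inE /= addbA addbb eqxx => /esym /eqP.
Qed.

Lemma shifts_sides_extend1 s (A : {set BCPM_V n1}) f v :
  n1 <= n2 -> v \notin A -> hom_on A f -> shifts_sides s A f ->
  exists2 f', hom_on (v |: A) f' & shifts_sides s (v |: A) f' /\ {in A, f' =1 f}.
Proof.
case: v => b i le vA hf hs.
set S := [set (f (~~ b, j)).2 | j in [set~ i]].
have [m mS] : exists m, m \notin S.
  have S_small : #|S| < n2.
    apply: leq_ltn_trans (leq_imset_card _ _) _.
    by rewrite cardsC1 card_ord; have := ltn_ord i; lia.
  have /set0Pn [m] : ~: S != set0.
    by rewrite -card_gt0; have := cardsC S; rewrite card_ord; lia.
  by rewrite inE; exists m.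
exists (fun y => if y == (b, i) then (b (+) s, m) else f y).
  apply: hom_on_setU1 (@BCPM_adj_sym _) (@BCPM_adj_sym _) (@BCPM_adj_irrefl _) hf _.
  move=> [c j] zA /andP [/= /negPf cb ij]; have := hs _ zA.
  have -> : c = ~~ b by move: cb; case: (b); case: (c).
  rewrite /BCPM_adj /= => ->; apply/andP; split; first by case: (b); case: (s).
  apply: contra mS => /eqP ->; apply/imsetP; exists j => //.
  by rewrite !inE eq_sym.
split.
  move=> y; rewrite !inE; case: (eqVneq y (b, i)) => [-> | _] //=.
  exact: hs.
move=> y yA; case: eqVneq => [e | //].
by move: vA; rewrite -e yA.
Qed.

Lemma shifts_sides_extend s (A : {set BCPM_V n1}) f :
  n1 <= n2 -> hom_on A f -> shifts_sides s A f ->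
  exists g, graph_hom (@BCPM_adj n1) (@BCPM_adj n2) g /\ {in A, g =1 f}.
Proof.
move=> le; have [k] := ubnP #|~: A|; elim: k A f => // k IH A f ltk hf hs.
have [/eqP AC0 | /set0Pn [v]] := boolP (~: A == set0).
  have AT : A = setT by rewrite -[A]setCK AC0 setC0.
  by exists f; split=> // x y; apply: hf; rewrite AT inE.
rewrite inE => vA.
have [f' hf' [hs' f'f]] := shifts_sides_extend1 le vA hf hs.
have [|g [hg gf']] := IH (v |: A) f' _ hf' hs'.
  by have := cardsC A; have := cardsC (v |: A); rewrite cardsU1 vA; lia.
by exists g; split=> // x xA; rewrite gf' ?f'f // inE xA orbT.
Qed.

End Extension.

Lemma BCPM_CHH_morphic_le n1 n2 :
  n1 <= n2 -> CHH_morphic (@BCPM_adj n1) (@BCPM_adj n2).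
Proof.
move=> le A B f A_conn hf _.
have [s hs] := hom_on_shifts_sides A_conn hf.
exact: shifts_sides_extend le hf hs.
Qed.

Definition head_set (n k : nat) : {set BCPM_V n} :=
  [set v : BCPM_V n | (v.2 < k) && (v.1 || (v.2 < 2))].

Lemma head_set_connected n k :
  3 <= k <= n -> induced_connected (@BCPM_adj n) (head_set n k).
Proof.
case/andP=> k3 kn.
set R := [rel u v | [&& u \in head_set n k, v \in head_set n k & BCPM_adj u v]].
have R_sym : symmetric R by move=> u v /=; rewrite BCPM_adj_sym andbCA.
have lt0 : 0 < n by lia.
have lt1 : 1 < n by lia.
have lt2 : 2 < n by lia.
pose hub : BCPM_V n := (true, Ordinal lt2).
have to_hub v : v \in head_set n k -> connect R v hub.
  case: v => -[] i; rewrite inE /= => /andP [ik hi].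
    pose x : BCPM_V n := (false, if i == 0 :> nat then Ordinal lt1 else Ordinal lt0).
    apply: (@connect_trans _ _ x); apply: connect1;
      by rewrite /= !inE /BCPM_adj /= -!val_eqE /=; case: ifP => /= /eqP; lia.
  by apply: connect1; rewrite /= !inE /BCPM_adj /= -!val_eqE /=; lia.
split.
  by apply/set0Pn; exists hub; rewrite inE /=; lia.
move=> u v uA vA; apply: connect_trans (to_hub u uA) _.
by rewrite (sym_connect_sym R_sym); apply: to_hub.
Qed.

Lemma hom_not_fixing_ys n1 n2 (lt : n1 < n2) (g : BCPM_V n2 -> BCPM_V n1) :
  graph_hom (@BCPM_adj n2) (@BCPM_adj n1) g ->
  ~ (forall j : 'I_n1, g (true, widen_ord (ltnW lt) j) = (true, j)).
Proof.
move=> hg fix_ys.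
pose z : BCPM_V n2 := (false, Ordinal lt).
case gz : (g z) => [b k].
have : BCPM_adj z (true, widen_ord (ltnW lt) k).
  by rewrite /BCPM_adj /= -val_eqE /=; have := ltn_ord k; lia.
by move/hg; rewrite fix_ys gz /BCPM_adj /= eqxx andbF.
Qed.

Lemma BCPM_not_CHH_morphic n1 n2 :
  3 <= n2 < n1 -> ~ CHH_morphic (@BCPM_adj n1) (@BCPM_adj n2).
Proof.
case: n2 => [// | m] /andP [m3 lt] hm.
pose f (v : BCPM_V n1) : BCPM_V m.+1 := (v.1, inord v.2).
have hf : hom_on (@BCPM_adj n1) (@BCPM_adj m.+1) (head_set n1 m.+1) f.
  move=> u v; rewrite !inE => /andP [um _] /andP [vm _] /andP [uv uv2].
  by rewrite /BCPM_adj /= uv -val_eqE /= !inordK.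
have A_conn : induced_connected (@BCPM_adj n1) (head_set n1 m.+1).
  by apply: head_set_connected; rewrite m3 ltnW.
have [g [hg gf]] := hm _ _ f A_conn hf erefl.
apply: (hom_not_fixing_ys hg) => j.
by rewrite gf ?inE /= ?ltn_ord // /f /= inord_val.
Qed.

Lemma BCPM_CHH_morphicP n1 n2 :
  3 <= n2 -> CHH_morphic (@BCPM_adj n1) (@BCPM_adj n2) <-> n1 <= n2.
Proof.
move=> n2_3; split; last exact: BCPM_CHH_morphic_le.
by move=> hm; rewrite leqNgt; apply/negP => lt; apply: BCPM_not_CHH_morphic hm; rewrite n2_3.
Qed.

Lemma BCPM_isoP n1 n2 : graph_iso (@BCPM_adj n1) (@BCPM_adj n2) <-> n1 = n2.
Proof.
split=> [[g [/bij_eq_card]]| <-]; last by exists id; split=> //; exists id.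
by rewrite !card_prod !card_bool !card_ord; lia.
Qed.

Theorem lemma6p4 (n1 n2 : nat) (h1 : 3 <= n1) (h2 : 3 <= n2) :
  CHH_symmetric (@BCPM_adj n1) (@BCPM_adj n2) <->
  graph_iso (@BCPM_adj n1) (@BCPM_adj n2).
Proof.
rewrite BCPM_isoP /CHH_symmetric (BCPM_CHH_morphicP _ h2) (BCPM_CHH_morphicP _ h1).
by split=> [[le12 le21] | ->]; [apply/eqP; rewrite eqn_leq le12 | ].
Qed.
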